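(* With the setup of the context, assume that $\overline H$ satisfies the bunkbed conjecture and let $\mu$ be a symmetric weight on $F$. Then for all $x,y\in V(\overline H)$, $\mathbb P_{F,\mu}(x^-\sim_F y^+)\le \mathbb P_{F,\mu}(x^-\sim_F y^-)$.
   Context: All graphs are finite and simple. For a graph $G$, a weight is a function $\mu\colon E(G)\to[0,1]$; the associated edge-percolation probability space has sample space $\mathscr P(E(G))$, with $\mathbb P_{G,\mu}(X)=\prod_{e\in X}\mu(e)\prod_{e\notin X}(1-\mu(e))$ for $X\subseteq E(G)$ (edges independently open, edge $e$ with probability $\mu(e)$). For vertices $x,y$, $(x\sim_G y)$ is the event that $x$ and $y$ are joined by a path of open edges of $G$. The bunkbed graph $BB(G)=G\,\Box\,K_2$ has vertex set $V(G)\times\{0,1\}$, writing $x^-=(x,0)$, $x^+=(x,1)$, with edges $x^-y^-$ and $x^+y^+$ for every $xy\in E(G)$ and vertical edges $x^-x^+$ for every $x\in V(G)$. A weight $\mu$ on $BB(G)$ is symmetric if $\mu(x^-y^-)=\mu(x^+y^+)$ for every $xy\in E(G)$. A graph $G$ satisfies the bunkbed conjecture if for every symmetric weight $\mu$ on $BB(G)$ and all $x,y\in V(G)$, $\mathbb P_{BB(G),\mu}(x^-\sim y^-)\ge \mathbb P_{BB(G),\mu}(x^-\sim y^+)$. Setup: let $\overline F$ be a graph and $v\in V(\overline F)$ a cut vertex; let $V_1,\dots,V_k$ ($k\ge2$) be the vertex sets of the components of $\overline F\setminus\{v\}$, fix $I\subseteq\{1,\dots,k\}$, and set $\overline G=\overline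 F[\bigcup_{i\in I}V_i\cup\{v\}]$, $\overline H=\overline F[\bigcup_{i\notin I}V_i\cup\{v\}]$ (induced subgraphs). Let $F=BB(\overline F)$, $G=BB(\overline G)$, $H=BB(\overline H)$, regarded as subgraphs of $F$. *)

From HB Require Import structures.
From mathcomp Require Import all_boot all_order all_algebra.
From mathcomp Require Import reals.
Set Implicit Arguments. Unset Strict Implicit. Unset Printing Implicit Defensive.
Import Order.TTheory GRing.Theory Num.Theory.
Local Open Scope ring_scope.

Definition simple_graph (W : finType) (r : rel W) : Prop :=
  symmetric r /\ irreflexive r.

(* Bunkbed graph BB(G) = G [] K_2 on W * bool;  x^- = (x,false), x^+ = (x,true). *)
Definition bb_adj (W : finType) (r : rel W) : rel (W * bool) :=
  fun p q => ((p.2 == q.2) && r p.1 q.1) || ((p.1 == q.1) && (p.2 != q.2)).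

Definition bb_edges (W : finType) (r : rel W) : {set {set (W * bool)}} :=
  [set X | [exists p, exists q, (X == [set p; q]) && bb_adj r p q]].

Definition is_weight (R : realType) (T : finType) (E : {set {set T}})
  (mu : {set T} -> R) : Prop :=
  forall ed, ed \in E -> 0 <= mu ed <= 1.

Definition bb_symmetric (R : realType) (W : finType) (r : rel W)
  (mu : {set (W * bool)} -> R) : Prop :=
  forall a b, r a b ->
    mu [set (a, false); (b, false)] = mu [set (a, true); (b, true)].

Definition perc_prob (R : realType) (T : finType) (E : {set {set T}})
  (mu : {set T} -> R) (A : pred {set {set T}}) : R :=
  \sum_(X in powerset E | A X)
     ((\prod_(ed in X) mu ed) * (\prod_(ed in E :\: X) (1 - mu ed))).

Definition joined (T : finType) (p q : T) : pred {set {set T}} :=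
  fun X => connect (fun a b => [set a; b] \in X) p q.

Definition bb_prob (R : realType) (W : finType) (r : rel W)
  (mu : {set (W * bool)} -> R) (p q : W * bool) : R :=
  perc_prob (bb_edges r) mu (joined p q).

Definition bunkbed (R : realType) (W : finType) (r : rel W) : Prop :=
  forall mu : {set (W * bool)} -> R,
    is_weight (bb_edges r) mu -> bb_symmetric r mu ->
    forall x y : W,
      bb_prob r mu (x, false) (y, true) <= bb_prob r mu (x, false) (y, false).

Definition del_rel (V : finType) (e : rel V) (v : V) : rel V :=
  fun x y => [&& x != v, y != v & e x y].

Definition comp_of (V : finType) (e : rel V) (v x : V) : {set V} :=
  [set y | (y != v) && connect (del_rel e v) x y].

Definition comps (V : finType) (e : rel V) (v : V) : {set {set V}} :=
  [set comp_of e v x | x in [set~ v]].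

Definition G_verts (V : finType) (e : rel V) (v : V) (I : {set {set V}}) : {set V} :=
  v |: \bigcup_(C in comps e v :&: I) C.
Definition H_verts (V : finType) (e : rel V) (v : V) (I : {set {set V}}) : {set V} :=
  v |: \bigcup_(C in comps e v :\: I) C.

Definition induced (V : finType) (e : rel V) (S : {set V}) : rel {x : V | x \in S} :=
  fun a b => e (val a) (val b).
Arguments induced {V} e S.

From HB Require Import structures.
From mathcomp Require Import all_boot all_order all_algebra.
From mathcomp Require Import reals.
From mathcomp Require Import ring lra.
Set Implicit Arguments. Unset Strict Implicit. Unset Printing Implicit Defensive.
Import Order.TTheory GRing.Theory Num.Theory.
Local Open Scope ring_scope.

(* Integrate out the open edges of BB(Gbar) other than the rung v^- v^+.
   Since BB(Gbar) meets BB(Hbar) only in v^- and v^+, for endpoints in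
   BB(Hbar) those edges matter only through the event that they join v^- to
   v^+, and that event just opens the rung: connection probabilities in F
   between vertices of Hbar are those of BB(Hbar) with the weight m of the rung
   raised to m + (1 - m) P(v^- ~ v^+ in BB(Gbar) - rung).  The rung is vertical,
   so the new weight is still symmetric and the bunkbed property of Hbar
   applies. *)

Lemma connect_ind (T : finType) (r : rel T) (P : T -> Prop) x y :
  P x -> (forall a b, P a -> r a b -> P b) -> connect r x y -> P y.
Proof.
move=> Px Pr /connectP[s]; elim: s x Px => [|z s IHs] x Px /=; first by move=> _ ->.
by case/andP=> /(Pr _ _ Px) Pz; apply: IHs.
Qed.

Section Joined.
Variable T : finType.
Implicit Types (A B X Y : {set {set T}}) (S SA SB : {set T}) (p q u w : T).

Definition open_adj X : rel T := fun a b => [set a; b] \in X.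

Lemma open_adj_sym X : symmetric (open_adj X).
Proof. by move=> a b; rewrite /open_adj setUC. Qed.

Lemma joinedC X p q : joined p q X = joined q p X.
Proof. exact: (sym_connect_sym (open_adj_sym X)). Qed.

Lemma joined_refl X p : joined p p X.
Proof. exact: connect0. Qed.

Lemma joined_edge X p q : [set p; q] \in X -> joined p q X.
Proof. exact: connect1. Qed.

Lemma joined_trans X p q r : joined p q X -> joined q r X -> joined p r X.
Proof. exact: connect_trans. Qed.

Lemma joined_subset X Y p q : X \subset Y -> joined p q X -> joined p q Y.
Proof.
by move=> XY; apply: connect_sub => a b ab; apply/joined_edge/(subsetP XY).
Qed.

Lemma joined_support X S (p q : T) : {in X, forall ed : {set T}, ed \subset S} ->
  p != q -> joined p q X -> p \in S.
Proof.
move=> XS pq /connectP[[|z s] /= pth pq_last]; first by rewrite pq_last eqxx in pq.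
case/andP: pth => pz _; have /subsetP := XS _ pz; apply; exact: set21.
Qed.

Lemma joined_set2 X u w a b : joined u w X ->
  a \in [set u; w] -> b \in [set u; w] -> joined a b X.
Proof.
move=> uw; rewrite !inE => /orP[]/eqP-> /orP[]/eqP->; rewrite ?joined_refl //.
by rewrite joinedC.
Qed.

(* If the open edges of [B] only touch [A]'s side at [u] and [w], then, seen
   from [A]'s side, [B] acts exactly as a single edge [uw] that is open
   whenever [u] and [w] are joined inside [B]. *)
Lemma joined_glue SA SB u w A B p q :
  SA :&: SB \subset [set u; w] ->
  {in A, forall ed : {set T}, ed \subset SA} -> {in B, forall ed : {set T}, ed \subset SB} ->
  p \in SA -> q \in SA ->
  joined p q (A :|: B) = joined p q (if joined u w B then [set u; w] |: A else A).
Proof.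
move=> SAB AS BS pSA qSA; set Y := if joined u w B then _ else _.
have AY : A \subset Y by rewrite /Y; case: ifP => _; rewrite ?subsetUr.
have through_B s z : s \in SA -> z \in SA -> joined s z B -> joined s z Y.
  have [-> _ _ _|sz sSA zSA sz_B] := eqVneq s z; first exact: joined_refl.
  have mem_uw a : a \in SA -> a \in SB -> a \in [set u; w].
    by move=> aSA aSB; apply: (subsetP SAB); rewrite inE aSA.
  have s_uw := mem_uw s sSA (joined_support BS sz sz_B).
  have z_uw : z \in [set u; w].
    by apply: mem_uw zSA (joined_support (q := s) BS _ _); rewrite 1?eq_sym 1?joinedC.
  have uw_B : joined u w B.
    apply: joined_set2 sz_B _ _; move: s_uw z_uw sz; rewrite !inE;
      by case/orP=> /eqP-> /orP[]/eqP->; rewrite ?eqxx ?orbT.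
  apply: joined_set2 _ s_uw z_uw; apply: joined_edge.
  by rewrite /Y uw_B setU11.
apply/idP/idP => [pq_AB|].
  have [s /andP[sSA ps] sq] : exists2 s, (s \in SA) && joined p s Y & joined s q B.
    apply: (connect_ind (P := fun z => exists2 s, (s \in SA) && joined p s Y & joined s z B))
      pq_AB; first by exists p; rewrite ?pSA ?joined_refl.
    move=> a b [s /andP[sSA ps] sa]; rewrite /= inE => /orP[abA|abB]; last first.
      by exists s; rewrite ?sSA ?ps //; apply: joined_trans sa (joined_edge abB).
    have /subsetP abSA := AS _ abA.
    exists b; rewrite ?joined_refl // abSA ?set22 //=.
    apply: joined_trans (joined_trans ps (through_B _ _ sSA (abSA _ (set21 _ _)) sa)) _.
    exact/joined_edge/(subsetP AY).
  exact: joined_trans ps (through_B _ _ sSA qSA sq).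
apply: connect_sub => a b; rewrite /Y; case: ifP => [uw_B|_] ab_Y; last first.
  by apply: joined_edge; rewrite inE ab_Y.
case/setU1P: ab_Y => [ab_uw|abA]; last by apply: joined_edge; rewrite inE abA.
apply: joined_set2 (joined_subset (subsetUr A B) uw_B) _ _;
  by rewrite -ab_uw ?set21 ?set22.
Qed.

End Joined.

Lemma setU1_ind (T : finType) (P : {set T} -> Prop) :
  P set0 -> (forall (a : T) (A : {set T}), a \notin A -> P A -> P (a |: A)) -> forall A, P A.
Proof.
move=> P0 PU1 A; elim: {A}#|A| {-2}A (erefl #|A|) => [|n IHn] A cardA.
  by move/eqP: cardA; rewrite cards_eq0 => /eqP ->.
have [A0|[a aA]] := set_0Vmem A; first by rewrite A0 cards0 in cardA.
rewrite -(setD1K aA); apply: PU1; first by rewrite setD11.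
by apply: IHn; move: cardA; rewrite (cardsD1 a) aA => -[].
Qed.

Section PercExpect.
Variables (R : comNzRingType) (T : finType).
Implicit Types (E X : {set {set T}}) (mu : {set T} -> R) (f g : {set {set T}} -> R).

Definition perc_weight E mu X :=
  \prod_(ed in X) mu ed * \prod_(ed in E :\: X) (1 - mu ed).

Definition perc_expect E mu f := \sum_(X in powerset E) perc_weight E mu X * f X.

Lemma eq_perc_expect E mu f g :
  {in powerset E, f =1 g} -> perc_expect E mu f = perc_expect E mu g.
Proof. by move=> fg; apply: eq_bigr => X /fg ->. Qed.

Lemma eq_perc_expect_weight E mu mu' f :
  {in E, mu =1 mu'} -> perc_expect E mu f = perc_expect E mu' f.
Proof.
move=> mu_mu'; apply: eq_bigr => X; rewrite powersetE => XE.
rewrite /perc_weight; congr (_ * _ * _); apply: eq_bigr => ed.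
  by move/(subsetP XE)/mu_mu' ->.
by rewrite inE => /andP[_ /mu_mu' ->].
Qed.

Lemma perc_expectD E mu f g :
  perc_expect E mu (fun X => f X + g X) = perc_expect E mu f + perc_expect E mu g.
Proof. by rewrite -big_split; apply: eq_bigr => X _; rewrite mulrDr. Qed.

Lemma perc_expectMl E mu c f :
  perc_expect E mu (fun X => c * f X) = c * perc_expect E mu f.
Proof. by rewrite mulr_sumr; apply: eq_bigr => X _; rewrite mulrCA. Qed.

Lemma perc_weightU E1 E2 mu X1 X2 : [disjoint E1 & E2] ->
  X1 \subset E1 -> X2 \subset E2 ->
  perc_weight (E1 :|: E2) mu (X1 :|: X2) = perc_weight E1 mu X1 * perc_weight E2 mu X2.
Proof.
move=> dE X1E1 X2E2.
have dX : [disjoint X1 & X2] by apply: disjointWl X1E1 (disjointWr X2E2 dE).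
have dD : [disjoint E1 :\: X1 & E2 :\: X2].
  by apply: disjointWl (subsetDl _ _) (disjointWr (subsetDl _ _) dE).
rewrite /perc_weight.
have -> : (E1 :|: E2) :\: (X1 :|: X2) = (E1 :\: X1) :|: (E2 :\: X2).
  apply/setP => ed; rewrite !inE.
  move: (subsetP X1E1 ed) (subsetP X2E2 ed) (@disjointFr _ _ _ ed dE).
  case: (ed \in X1); case: (ed \in X2); case: (ed \in E1); case: (ed \in E2);
    rewrite //= => h1 h2 h3; by [have := h1 isT | have := h2 isT | have := h3 isT].
rewrite mulrACA -!bigU //; congr (_ * _); apply: eq_bigl => ed; by rewrite !inE.
Qed.

Lemma perc_expectU E1 E2 mu f : [disjoint E1 & E2] ->
  perc_expect (E1 :|: E2) mu f =
  perc_expect E1 mu (fun X1 => perc_expect E2 mu (fun X2 => f (X1 :|: X2))).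
Proof.
move=> dE; rewrite /perc_expect.
under [RHS]eq_bigr do rewrite mulr_sumr.
rewrite pair_big_dep /=.
rewrite (reindex_onto (fun P => P.1 :|: P.2) (fun X => (X :&: E1, X :&: E2))) /=; last first.
  by move=> X; rewrite powersetE => XE; rewrite -setIUr (setIidPl XE).
have subset_split X1 X2 :
    (X1 :|: X2 \in powerset (E1 :|: E2)) && (((X1 :|: X2) :&: E1, (X1 :|: X2) :&: E2) == (X1, X2))
    = (X1 \in powerset E1) && (X2 \in powerset E2).
  rewrite !powersetE xpair_eqE; apply/andP/andP => [[_ /andP[/eqP <- /eqP <-]]|[X1E1 X2E2]].
    by rewrite !subsetIr.
  have d12 : [disjoint X1 & E2] by apply: disjointWl X1E1 dE.
  have d21 : [disjoint X2 & E1] by rewrite disjoint_sym; apply: disjointWr X2E2 dE.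
  rewrite setUSS //= !setIUl (setIidPl X1E1) (setIidPl X2E2).
  by rewrite (disjoint_setI0 d12) (disjoint_setI0 d21) setU0 set0U !eqxx.
apply: eq_big => [[X1 X2]|[X1 X2]] /=; rewrite subset_split // !powersetE.
by move=> /andP[X1E1 X2E2]; rewrite perc_weightU // mulrA.
Qed.

Lemma perc_expect_set1 a mu f :
  perc_expect [set a] mu f = mu a * f [set a] + (1 - mu a) * f set0.
Proof.
rewrite /perc_expect powerset1 big_setU1 ?big_set1 /=; last first.
  by rewrite inE eq_sym -cards_eq0 cards1.
rewrite /perc_weight setDv setD0 !big_set0 big_set1 mul1r mulr1 addrC.
by rewrite big_set1.
Qed.

Lemma perc_expectU1 a E mu f : a \notin E ->
  perc_expect (a |: E) mu f =
  mu a * perc_expect E mu (fun X => f (a |: X)) + (1 - mu a) * perc_expect E mu f.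
Proof.
rewrite -disjoints1 => aE; rewrite perc_expectU // perc_expect_set1.
by under [in X in _ + _ * X]eq_perc_expect do rewrite set0U.
Qed.

Lemma perc_expect0 mu f : perc_expect set0 mu f = f set0.
Proof.
by rewrite /perc_expect powerset0 big_set1 /perc_weight setD0 !big_set0 !mul1r.
Qed.

Lemma perc_expect_cst E mu c : perc_expect E mu (fun=> c) = c.
Proof.
elim/setU1_ind: E => [|a E aE IH]; first by rewrite perc_expect0.
by rewrite perc_expectU1 // !IH -mulrDl addrC subrK mul1r.
Qed.

(* Opening [a] additionally whenever an independent event [C] occurs amounts
   to raising its probability from [mu a] to [mu a + (1 - mu a) P(C)]. *)
Lemma perc_expect_open_if a E E' mu (C : pred {set {set T}}) f : a \notin E ->
  perc_expect (a |: E) mu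
    (fun X => perc_expect E' mu (fun X' => f (if C X' then a |: X else X)))
  = perc_expect (a |: E)
      [eta mu with a |-> mu a + (1 - mu a) * perc_expect E' mu (fun X' => (C X')%:R)] f.
Proof.
move=> aE; set pC := perc_expect E' mu _.
have mu_out : {in E, mu =1 [eta mu with a |-> mu a + (1 - mu a) * pC]}.
  by move=> ed edE /=; case: eqP => // eda; rewrite -eda edE in aE.
have expect_if Y Z : perc_expect E' mu (fun X' => f (if C X' then Y else Z)) =
    pC * f Y + (1 - pC) * f Z.
  transitivity (perc_expect E' mu (fun X' => (f Y - f Z) * (C X')%:R + f Z)).
    by apply: eq_perc_expect => X' _; case: (C X'); rewrite ?mulr1 ?mulr0 ?subrK ?add0r.
  by rewrite perc_expectD perc_expectMl perc_expect_cst -/pC; ring.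
rewrite !perc_expectU1 //= eqxx -!(eq_perc_expect_weight _ mu_out).
under eq_perc_expect do rewrite setUA setUid expect_if.
under [in X in _ + _ * X]eq_perc_expect do rewrite expect_if.
by rewrite !perc_expectD !perc_expectMl; ring.
Qed.

End PercExpect.

Lemma perc_expect_imset (R : comNzRingType) (T T' : finType) (h : {set T} -> {set T'})
    (E : {set {set T}}) mu (f : {set {set T'}} -> R) : injective h ->
  perc_expect (h @: E) mu f = perc_expect E (mu \o h) (fun X => f (h @: X)).
Proof.
move=> h_inj; elim/setU1_ind: E f => [|a E aE IH] f.
  by rewrite imset0 !perc_expect0 imset0.
rewrite imsetU1 !perc_expectU1 ?(mem_imset _ _ h_inj) // !IH.
by under [in RHS]eq_perc_expect do rewrite imsetU1.
Qed.

Lemma perc_expect_in01 (R : realDomainType) (T : finType) (E : {set {set T}})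
    (mu : {set T} -> R) (f : {set {set T}} -> R) :
  {in E, forall ed, 0 <= mu ed <= 1} -> {in powerset E, forall X, 0 <= f X <= 1} ->
  0 <= perc_expect E mu f <= 1.
Proof.
move=> mu01 f01.
have weight_ge0 X : X \in powerset E -> 0 <= perc_weight E mu X.
  rewrite powersetE => XE; apply: mulr_ge0; apply: prodr_ge0 => ed.
    by move/(subsetP XE)/mu01/andP => [].
  by rewrite inE => /andP[_ /mu01/andP[_]]; rewrite subr_ge0.
apply/andP; split.
  by apply: sumr_ge0 => X XE; rewrite mulr_ge0 ?weight_ge0 // (andP (f01 X XE)).1.
rewrite -[leRHS](perc_expect_cst E mu 1); apply: ler_sum => X XE.
by rewrite ler_wpM2l ?weight_ge0 // (andP (f01 X XE)).2.
Qed.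

Lemma perc_probE (R : realType) (T : finType) (E : {set {set T}})
    (mu : {set T} -> R) (A : pred {set {set T}}) :
  perc_prob E mu A = perc_expect E mu (fun X => (A X)%:R).
Proof.
rewrite /perc_prob /perc_expect big_mkcondr; apply: eq_bigr => X _.
by case: (A X); rewrite ?mulr1 ?mulr0.
Qed.

Lemma joined_imset (T T' : finType) (f : T -> T') (X : {set {set T}}) p q :
  injective f -> joined (f p) (f q) [set f @: ed | ed : {set T} in X] = joined p q X.
Proof.
move=> f_inj; set fX := [set _ | _ in X].
have fX_adj a b : open_adj fX (f a) (f b) = open_adj X a b.
  by rewrite /open_adj -[RHS](mem_imset _ _ (imset_inj f_inj)) imsetU1 imset_set1.
apply/idP/idP => pq; last first.
  apply: (connect_ind (P := fun z => joined (f p) (f z) fX)) pq; first exact: joined_refl.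
  by move=> a b pa ab; apply: joined_trans pa (joined_edge _); rewrite -/(open_adj _ _ _) fX_adj.
have [q0 fq pq0] : exists2 q0, f q = f q0 & joined p q0 X.
  apply: (connect_ind (P := fun z => exists2 z0, z = f z0 & joined p z0 X)) pq;
    first by exists p; rewrite ?joined_refl.
  move=> _ b [a -> pa] /= /imsetP[ed edX edE].
  have /imsetP[b0 _ b_eq] : b \in f @: ed by rewrite -edE set22.
  subst b.
  exists b0 => //; apply: joined_trans pa (joined_edge _).
  by rewrite -[_ \in X]/(open_adj X a b0) -fX_adj /open_adj edE imset_f.
by rewrite (f_inj _ _ fq).
Qed.

Lemma bb_edgesP (W : finType) (r : rel W) ed :
  reflect (exists p q, ed = [set p; q] /\ bb_adj r p q) (ed \in bb_edges r).
Proof.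
rewrite inE; apply: (iffP existsP) => [[p /existsP[q /andP[/eqP-> pq]]]|[p [q [-> pq]]]].
  by exists p, q.
by exists p; apply/existsP; exists q; rewrite eqxx.
Qed.

Section Bunkbed.
Variables (W : finType) (r : rel W).
Implicit Type S : {set W}.

Definition rung (x : W) : {set W * bool} := [set (x, false); (x, true)].

Definition bb_edges_in (S : {set W}) : {set {set W * bool}} :=
  [set ed in bb_edges r | ed \subset setX S setT].

Lemma in_bb_edges_in S ed :
  (ed \in bb_edges_in S) = (ed \in bb_edges r) && (ed \subset setX S setT).
Proof. exact: in_set. Qed.

Lemma rung_bb_edges x : rung x \in bb_edges r.
Proof. by apply/bb_edgesP; exists (x, false), (x, true); rewrite /bb_adj /= eqxx. Qed.

Lemma rung_bb_edges_in S x : x \in S -> rung x \in bb_edges_in S.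
Proof.
move=> xS; rewrite in_bb_edges_in rung_bb_edges; apply/subsetP => _ /set2P[]->;
  by rewrite in_setX xS in_setT.
Qed.

Definition bb_val {S} (w : {x | x \in S} * bool) : W * bool := (val w.1, w.2).

Lemma bb_val_inj S : injective (@bb_val S).
Proof. by move=> [a s] [b t] [/val_inj-> ->]. Qed.

Lemma bb_edges_induced S :
  [set bb_val @: ed | ed : {set {x | x \in S} * bool} in bb_edges (induced r S)] = bb_edges_in S.
Proof.
apply/setP => ed; rewrite in_bb_edges_in; apply/imsetP/andP => [[_ /bb_edgesP[p [q [-> pq]]] ->]|].
  rewrite imsetU1 imset_set1; split; first by apply/bb_edgesP; exists (bb_val p), (bb_val q).
  by apply/subsetP => _ /set2P[]->; rewrite in_setX in_setT andbT; apply: valP.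
move=> [/bb_edgesP[[x s] [[y t] [-> xy]]] /subsetP xyS].
have /xyS /[!in_setX] /andP[xS _] : (x, s) \in [set (x, s); (y, t)] by rewrite set21.
have /xyS /[!in_setX] /andP[yS _] : (y, t) \in [set (x, s); (y, t)] by rewrite set22.
exists [set (exist _ x xS, s); (exist _ y yS, t)]; last by rewrite imsetU1 imset_set1.
by apply/bb_edgesP; do 2!eexists.
Qed.

Lemma bb_prob_induced (R : realType) S mu p q :
  bb_prob (induced r S) (fun ed => mu (bb_val @: ed)) p q
  = perc_prob (bb_edges_in S) mu (joined (bb_val p) (bb_val q)) :> R.
Proof.
rewrite /bb_prob !perc_probE -bb_edges_induced perc_expect_imset; last first.
  exact/imset_inj/bb_val_inj.
by apply: eq_perc_expect => X _; rewrite joined_imset //; apply: bb_val_inj.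
Qed.

End Bunkbed.
Arguments bb_val {W S} w.

Section CutVertex.
Variables (V : finType) (e : rel V) (v : V) (I : {set {set V}}).
Hypothesis e_sym : symmetric e.

Local Notation Hs := (H_verts e v I).
Local Notation Gs := (G_verts e v I).

Lemma del_rel_sym : symmetric (del_rel e v).
Proof. by move=> a b; rewrite /del_rel e_sym andbCA. Qed.

Lemma comp_of_eq x y : y \in comp_of e v x -> comp_of e v y = comp_of e v x.
Proof.
rewrite inE => /andP[_ xy]; apply/setP => z; rewrite !inE; congr (_ && _).
apply/idP/idP; first exact: connect_trans.
by apply: connect_trans; rewrite (sym_connect_sym del_rel_sym).
Qed.

Lemma comp_of_self y : y != v -> y \in comp_of e v y.
Proof. by move=> yv; rewrite inE yv connect0. Qed.

Lemma mem_bigcup_comps (J : {set {set V}}) y : y != v ->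
  (y \in \bigcup_(C in comps e v :&: J) C) = (comp_of e v y \in J).
Proof.
move=> yv; apply/bigcupP/idP => [[C] | yJ].
  by rewrite inE => /andP[/imsetP[x _ ->] CJ] /comp_of_eq ->.
exists (comp_of e v y); last exact: comp_of_self.
by rewrite inE yJ andbT; apply/imsetP; exists y; rewrite ?inE.
Qed.

Lemma in_H_verts y : y != v -> (y \in Hs) = (comp_of e v y \notin I).
Proof.
by move=> yv; rewrite /H_verts setDE in_setU1 (negbTE yv) mem_bigcup_comps // inE.
Qed.

Lemma in_G_verts y : y != v -> (y \in Gs) = (comp_of e v y \in I).
Proof. by move=> yv; rewrite /G_verts in_setU1 (negbTE yv) mem_bigcup_comps. Qed.

Lemma cut_in_H_verts : v \in Hs. Proof. exact: setU11. Qed.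
Lemma cut_in_G_verts : v \in Gs. Proof. exact: setU11. Qed.

Lemma H_verts_G_verts y : y \in Hs -> y \in Gs -> y = v.
Proof.
have [//|yv] := eqVneq y v.
by rewrite in_H_verts // in_G_verts // => /negbTE->.
Qed.

Lemma H_verts_or_G_verts y : (y \in Hs) || (y \in Gs).
Proof.
have [->|yv] := eqVneq y v; first by rewrite cut_in_H_verts.
by rewrite in_H_verts // in_G_verts // orNb.
Qed.

Lemma edge_sides a b : e a b -> (a \in Hs) && (b \in Hs) || (a \in Gs) && (b \in Gs).
Proof.
move=> ab; have [->|av] := eqVneq a v.
  by rewrite cut_in_H_verts cut_in_G_verts H_verts_or_G_verts.
have [->|bv] := eqVneq b v.
  by rewrite cut_in_H_verts cut_in_G_verts !andbT H_verts_or_G_verts.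
have b_comp : b \in comp_of e v a by rewrite inE bv connect1 // /del_rel av bv.
by rewrite !in_H_verts // !in_G_verts // (comp_of_eq b_comp) !andbb orNb.
Qed.

End CutVertex.

Section CutBunkbed.
Variables (V : finType) (e : rel V) (v : V) (I : {set {set V}}).
Hypotheses (e_sym : symmetric e) (e_irr : irreflexive e).

Local Notation Hs := (H_verts e v I).
Local Notation Gs := (G_verts e v I).
Local Notation EH := (bb_edges_in e Hs).
Local Notation EG := (bb_edges_in e Gs).

Lemma bb_edges_cut_cover : bb_edges e = EH :|: EG.
Proof.
apply/setP => ed; rewrite in_setU !in_bb_edges_in; case: (boolP (ed \in bb_edges e)) => //=.
case/bb_edgesP => [[x s] [[y t] [-> /orP[/andP[_ xy]|/andP[/eqP/= <- _]]]]].
  have sub2 (S : {set V}) : (x \in S) && (y \in S) -> [set (x, s); (y, t)] \subset setX S setT.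
    by case/andP=> xS yS; apply/subsetP => _ /set2P[]->; rewrite in_setX in_setT andbT.
  by case/orP: (edge_sides v I e_sym xy) => /sub2->; rewrite ?orbT.
have sub1 (S : {set V}) : x \in S -> [set (x, s); (x, t)] \subset setX S setT.
  by move=> xS; apply/subsetP => _ /set2P[]->; rewrite in_setX in_setT andbT.
by case/orP: (H_verts_or_G_verts v I e_sym x) => /sub1->; rewrite ?orbT.
Qed.

Lemma setX_cut_sides : setX Hs setT :&: setX Gs setT \subset rung v.
Proof.
apply/subsetP => -[x s]; rewrite in_setI !in_setX in_setT !andbT => /andP[xH xG].
by rewrite (H_verts_G_verts e_sym xH xG); case: s; rewrite ?set21 ?set22.
Qed.

Lemma bb_edges_cut_inter ed : ed \in EH -> ed \in EG -> ed = rung v.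
Proof.
rewrite !in_bb_edges_in => /andP[/bb_edgesP[p [q [edE pq]]] edH] /andP[_ edG].
have ed_rung : ed \subset rung v.
  by apply: subset_trans setX_cut_sides; rewrite subsetI edH.
have p_neq_q : p != q.
  by apply: contraTneq pq => ->; rewrite /bb_adj !eqxx e_irr.
apply/eqP; rewrite eqEcard ed_rung edE !cards2 p_neq_q.
by rewrite xpair_eqE eqxx.
Qed.

Lemma bb_edges_cut_split : bb_edges e = EH :|: (EG :\ rung v).
Proof.
apply/setP => ed; rewrite bb_edges_cut_cover !in_setU in_setD1.
have [->|//] := eqVneq ed (rung v).
by rewrite rung_bb_edges_in ?cut_in_H_verts.
Qed.

Lemma bb_edges_cut_disjoint : [disjoint EH & EG :\ rung v].
Proof.
rewrite -setI_eq0; apply/eqP/setP => ed; rewrite !in_set0 in_setI in_setD1.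
by apply/and3P => -[edH /eqP + edG]; apply; apply: bb_edges_cut_inter.
Qed.

Variable R : realType.
Implicit Type mu : {set V * bool} -> R.

Definition cut_rung_weight mu : R :=
  mu (rung v) + (1 - mu (rung v)) * perc_prob (EG :\ rung v) mu (joined (v, false) (v, true)).

Lemma bb_prob_cut mu p q : p \in setX Hs setT -> q \in setX Hs setT ->
  bb_prob e mu p q = perc_prob EH [eta mu with rung v |-> cut_rung_weight mu] (joined p q).
Proof.
move=> pH qH.
have glue (X1 X2 : {set {set V * bool}}) : X1 \subset EH -> X2 \subset EG :\ rung v ->
    joined p q (X1 :|: X2) =
    joined p q (if joined (v, false) (v, true) X2 then rung v |: X1 else X1).
  move=> /subsetP X1H /subsetP X2G; apply: joined_glue setX_cut_sides _ _ pH qH.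
    by move=> ed /X1H; rewrite in_bb_edges_in => /andP[].
  by move=> ed /X2G; rewrite in_setD1 in_bb_edges_in => /and3P[].
rewrite /bb_prob /cut_rung_weight !perc_probE bb_edges_cut_split perc_expectU; last first.
  exact: bb_edges_cut_disjoint.
have rung_EH := rung_bb_edges_in e (cut_in_H_verts e v I).
transitivity (perc_expect (rung v |: EH :\ rung v) mu (fun X1 =>
    perc_expect (EG :\ rung v) mu (fun X2 =>
      (joined p q (if joined (v, false) (v, true) X2 then rung v |: X1 else X1))%:R))).
  rewrite setD1K //; apply: eq_perc_expect => X1; rewrite powersetE => X1H.
  by apply: eq_perc_expect => X2; rewrite powersetE => X2G; rewrite glue.
by rewrite (perc_expect_open_if _ _ _ (fun X => (joined p q X)%:R)) ?setD11 // setD1K.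
Qed.

Definition H_weight mu (ed : {set {x | x \in Hs} * bool}) : R :=
  [eta mu with rung v |-> cut_rung_weight mu] (bb_val @: ed).

Lemma bb_prob_H_weight mu p q :
  bb_prob (induced e Hs) (H_weight mu) p q = bb_prob e mu (bb_val p) (bb_val q).
Proof.
by rewrite bb_prob_induced bb_prob_cut // in_setX in_setT andbT; apply: valP.
Qed.

Lemma cut_rung_weight_in01 mu : is_weight (bb_edges e) mu -> 0 <= cut_rung_weight mu <= 1.
Proof.
move=> muW; have /andP[m0 m1] := muW _ (rung_bb_edges e v).
have /andP[p0 p1] : 0 <= perc_prob (EG :\ rung v) mu (joined (v, false) (v, true)) <= 1.
  rewrite perc_probE; apply: perc_expect_in01 => [ed | X _]; last first.
    by case: (joined _ _ X); rewrite ?ler01 ?lexx.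
  by rewrite in_setD1 in_bb_edges_in => /and3P[_ /muW].
rewrite /cut_rung_weight; apply/andP; split; nra.
Qed.

Lemma is_weight_H_weight mu :
  is_weight (bb_edges e) mu -> is_weight (bb_edges (induced e Hs)) (H_weight mu).
Proof.
move=> muW ed edE; rewrite /H_weight /=; case: eqP => _; first exact: cut_rung_weight_in01.
have : bb_val @: ed \in EH by rewrite -bb_edges_induced imset_f.
by rewrite in_bb_edges_in => /andP[/muW].
Qed.

Lemma horizontal_neq_rung x y s : [set (x, s); (y, s)] != rung v.
Proof.
suff : (v, ~~ s) \notin [set (x, s); (y, s)].
  by apply: contraNneq => ->; case: s; rewrite ?set21 ?set22.
by rewrite !inE !xpair_eqE; case: s; rewrite !andbF.
Qed.

Lemma bb_symmetric_H_weight mu :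
  bb_symmetric e mu -> bb_symmetric (induced e Hs) (H_weight mu).
Proof.
move=> muS a b ab; rewrite /H_weight !imsetU1 !imset_set1 /=.
by rewrite !(negbTE (horizontal_neq_rung _ _ _)); apply: muS.
Qed.

End CutBunkbed.

Theorem lemma3p2 (R : realType) (V : finType) (e : rel V) (v : V)
  (I : {set {set V}}) :
  simple_graph e ->
  (2 <= #|comps e v|)%N ->
  I \subset comps e v ->
  bunkbed R (induced e (H_verts e v I)) ->
  forall mu : {set (V * bool)} -> R,
    is_weight (bb_edges e) mu -> bb_symmetric e mu ->
    forall x y : V, x \in H_verts e v I -> y \in H_verts e v I ->
      bb_prob e mu (x, false) (y, true) <= bb_prob e mu (x, false) (y, false).
Proof.
move=> [e_sym e_irr] _ _ bbH mu muW muS x y xH yH.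
have := bbH _ (is_weight_H_weight muW) (bb_symmetric_H_weight muS)
  (exist _ x xH) (exist _ y yH).
by rewrite !(bb_prob_H_weight e_sym e_irr).
Qed.
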